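(* Let $p\in\mathbb C[z,w]$ be a polynomial with $Z(p)\cap Z(z)\cap\partial\mathbb D^2=\emptyset$, and let $\mathcal M=[p,f_1,\dots,f_n]$ be the submodule of $H^2(\mathbb D^2)$ generated by $p$ and some $f_1,\dots,f_n\in H^2(\mathbb D^2)$. Set $Q=\mathcal M\ominus[p]$ and $T_{z,Q}=P_QM_z|_Q$. Then $\ker T_{z,Q}^*$ is finite dimensional.
   Context: $H^2(\mathbb D^2)$ is the Hardy space of the bidisc, a Hilbert module over $\mathbb C[z,w]$ via multiplication. A submodule is a closed subspace invariant under multiplication by polynomials; $[g_1,\dots,g_m]$ denotes the smallest submodule containing $g_1,\dots,g_m$. $Z(p)$ is the zero set of $p$ in $\mathbb C^2$ and $Z(z)=\{(z,w)\in\mathbb C^2:z=0\}$. *)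

From Stdlib Require Import Reals.
From Coquelicot Require Import Coquelicot.
Open Scope R_scope.

(** Elements of H^2(D^2) are identified with their Taylor coefficient arrays
    f : nat -> nat -> C  (f i j = coefficient of z^i w^j), square summable. *)
Definition coefs := nat -> nat -> C.

Fixpoint csum (u : nat -> C) (N : nat) : C :=
  match N with O => RtoC 0 | S N' => Cplus (csum u N') (u N') end.

Fixpoint rsum (u : nat -> R) (N : nat) : R :=
  match N with O => 0 | S N' => rsum u N' + u N' end.

Definition psum2 (f : coefs) (N : nat) : R :=
  rsum (fun i => rsum (fun j => (Cmod (f i j))^2) N) N.

Definition in_H2 (f : coefs) : Prop := exists M : R, forall N, psum2 f N <= M.

Definition csub (f g : coefs) : coefs := fun i j => Cminus (f i j) (g i j).

Definition pinner (f g : coefs) (N : nat) : C :=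
  csum (fun i => csum (fun j => Cmult (f i j) (Cconj (g i j))) N) N.

Definition orth (f g : coefs) : Prop :=
  is_lim_seq (fun N => Re (pinner f g N)) 0 /\
  is_lim_seq (fun N => Im (pinner f g N)) 0.

Record poly2 := Poly2 {
  pcoef : nat -> nat -> C;
  pdeg : nat;
  pcoef_supp : forall i j, (pdeg < i)%nat \/ (pdeg < j)%nat -> pcoef i j = RtoC 0
}.

Fixpoint cpow (a : C) (n : nat) : C :=
  match n with O => RtoC 1 | S n' => Cmult a (cpow a n') end.

Definition peval (p : poly2) (a b : C) : C :=
  csum (fun i => csum (fun j =>
      Cmult (pcoef p i j) (Cmult (cpow a i) (cpow b j))) (S (pdeg p))) (S (pdeg p)).

(** multiplication of an H^2 function by a polynomial (Cauchy product of coefficients) *)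
Definition mulp (q : poly2) (g : coefs) : coefs := fun i j =>
  csum (fun k => csum (fun l => Cmult (pcoef q k l) (g (i - k)%nat (j - l)%nat)) (S j)) (S i).

Definition mulz (g : coefs) : coefs := fun i j =>
  match i with O => RtoC 0 | S i' => g i' j end.

Definition pcombo (m : nat) (qs : nat -> poly2) (gs : nat -> coefs) : coefs :=
  fun i j => csum (fun k => mulp (qs k) (gs k) i j) m.

(** [g_0, ..., g_{m-1}] : the smallest submodule (closed, C[z,w]-invariant) containing
    the g_k, i.e. the H^2-norm closure of { sum_k q_k g_k : q_k in C[z,w] }. *)
Definition in_gen (m : nat) (gs : nat -> coefs) (f : coefs) : Prop :=
  in_H2 f /\
  forall eps : R, 0 < eps ->
    exists qs : nat -> poly2, forall N, psum2 (csub f (pcombo m qs gs)) N <= eps.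

Definition in_bdry_bidisc (a b : C) : Prop :=
  Cmod a <= 1 /\ Cmod b <= 1 /\ (Cmod a = 1 \/ Cmod b = 1).

Definition lincomb (d : nat) (cs : nat -> C) (vs : nat -> coefs) : coefs :=
  fun i j => csum (fun k => Cmult (cs k) (vs k i j)) d.

(* Let x lie in ker T_{z,Q}^*. Writing y in M as (y - P_[p] y) + P_[p] y shows that x is
   orthogonal to z M, and x is orthogonal to [p] by definition of Q. Hence, for each k, the
   sequence a_j = <w^j f_k, x> satisfies the linear recurrence obtained from <p w^m f_k, x> = 0,
   in which only the coefficients of p(0, w) survive; p(0, w) is not identically zero since
   (0, 1) lies on the boundary of the bidisc, so p(0, 1) <> 0. The sequence a_j is thus
   determined by a_0, ..., a_{deg p}, and if these vanish for every k, then x is orthogonal to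
   all z^a w^b f_k and to [p], hence to a dense subset of M, so x = 0. The n (deg p + 1)
   functionals x |-> <x, w^j f_k> therefore separate the points of the kernel, which is
   finite dimensional. *)

From Stdlib Require Import Reals Lra Lia Classical ClassicalEpsilon FunctionalExtensionality.
From Coquelicot Require Import Coquelicot.
Open Scope R_scope.

Ltac cexpand := repeat match goal with z : C |- _ => destruct z end;
  unfold Cplus, Cmult, Cminus, Copp, Cconj, RtoC, Re, Im in *; simpl in *.
Ltac cring := cexpand; apply injective_projections; simpl; ring.
Ltac cfield := cexpand; apply injective_projections; simpl; field.

Lemma Cmod2_nonneg z : 0 <= Cmod z ^ 2.
Proof. rewrite Cmod2_alt. nra. Qed.

Lemma Cmod2_0 : Cmod (RtoC 0) ^ 2 = 0.
Proof. rewrite Cmod2_alt; simpl; ring. Qed.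

Lemma Cmod2_mult a b : Cmod (Cmult a b) ^ 2 = Cmod a ^ 2 * Cmod b ^ 2.
Proof. rewrite !Cmod2_alt. destruct a, b; simpl. ring. Qed.

Lemma Cmod2_eq0 z : Cmod z ^ 2 <= 0 -> z = RtoC 0.
Proof. rewrite Cmod2_alt. destruct z as [a b]; simpl; intros H.
  assert (a = 0) by nra. assert (b = 0) by nra. subst. reflexivity. Qed.

Lemma Cmult_eq0_l a b : a <> RtoC 0 -> Cmult a b = RtoC 0 -> b = RtoC 0.
Proof. intros Ha H. replace b with (Cmult (Cinv a) (Cmult a b)).
  - rewrite H. cring.
  - rewrite Cmult_assoc, Cinv_l; auto. cring. Qed.

(** * Finite sums *)

Section FiniteSums.
Implicit Types (u v : nat -> R) (U : nat -> nat -> R).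

Lemma rsum_ext u v N : (forall k, (k < N)%nat -> u k = v k) -> rsum u N = rsum v N.
Proof. induction N; simpl; intros H; auto. rewrite IHN, H; auto. Qed.

Lemma rsum_plus u v N : rsum (fun k => u k + v k) N = rsum u N + rsum v N.
Proof. induction N; simpl; [lra|]. rewrite IHN; lra. Qed.

Lemma rsum_scal a u N : rsum (fun k => a * u k) N = a * rsum u N.
Proof. induction N; simpl; [lra|]. rewrite IHN; lra. Qed.

Lemma rsum_const a N : rsum (fun _ => a) N = INR N * a.
Proof. induction N; simpl rsum; [simpl; lra|]. rewrite IHN, S_INR. lra. Qed.

Lemma rsum_eq0 u N : (forall k, (k < N)%nat -> u k = 0) -> rsum u N = 0.
Proof. intros H. rewrite (rsum_ext u (fun _ => 0) N H), rsum_const. lra. Qed.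

Lemma rsum_le u v N : (forall k, (k < N)%nat -> u k <= v k) -> rsum u N <= rsum v N.
Proof. induction N; simpl; intros H; [lra|].
  assert (rsum u N <= rsum v N) by (apply IHN; intros; apply H; lia).
  pose proof (H N ltac:(lia)). lra. Qed.

Lemma rsum_nonneg u N : (forall k, 0 <= u k) -> 0 <= rsum u N.
Proof. intros H. apply Rle_trans with (rsum (fun _ => 0) N).
  - rewrite rsum_const; lra.
  - apply rsum_le; auto. Qed.

Lemma rsum_le_mono u N N' : (N <= N')%nat -> (forall k, 0 <= u k) -> rsum u N <= rsum u N'.
Proof. intros Hle H. induction Hle; simpl; [lra|]. pose proof (H m); lra. Qed.

Lemma rsum_extend u N N' : (N <= N')%nat -> (forall k, (N <= k < N')%nat -> u k = 0) ->
  rsum u N' = rsum u N.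
Proof. intros Hle. induction Hle; intros H; auto. simpl. rewrite IHHle, H; [lra|lia|].
  intros; apply H; lia. Qed.

Lemma rsum_term_le u N k : (forall k, 0 <= u k) -> (k < N)%nat -> u k <= rsum u N.
Proof. intros H Hk. induction N; [lia|]. simpl. destruct (Nat.eq_dec k N).
  - subst. pose proof (rsum_nonneg u N H). lra.
  - pose proof (H N). assert (u k <= rsum u N) by (apply IHN; lia). lra. Qed.

Lemma rsum_shift a u N :
  rsum (fun i => if (a <=? i)%nat then u (i - a)%nat else 0) N = rsum u (N - a).
Proof. induction N; [reflexivity|]. destruct (Nat.leb_spec a N) as [H|H].
  - replace (S N - a)%nat with (S (N - a)) by lia. simpl rsum. rewrite IHN.
    rewrite (proj2 (Nat.leb_le a N) H). reflexivity.
  - replace (S N - a)%nat with 0%nat by lia. simpl rsum. rewrite IHN.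
    replace (N - a)%nat with 0%nat by lia. rewrite (proj2 (Nat.leb_gt a N) H). simpl; lra. Qed.

Lemma rsum_swap U N K :
  rsum (fun i => rsum (fun k => U i k) K) N = rsum (fun k => rsum (fun i => U i k) N) K.
Proof. induction N; simpl. - rewrite rsum_eq0; auto. - rewrite IHN, <- rsum_plus. auto. Qed.

Lemma is_lim_seq_rsum (W : nat -> nat -> R) u N :
  (forall k, is_lim_seq (fun m => W m k) (u k)) -> is_lim_seq (fun m => rsum (W m) N) (rsum u N).
Proof. intros H. induction N; simpl. - apply is_lim_seq_const. - apply is_lim_seq_plus'; auto. Qed.

End FiniteSums.

Section ComplexSums.
Implicit Types (u v : nat -> C).

Lemma csum_ext u v N : (forall k, (k < N)%nat -> u k = v k) -> csum u N = csum v N.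
Proof. induction N; simpl; intros H; auto. rewrite IHN, H; auto. Qed.

Lemma csum_plus u v N : csum (fun k => Cplus (u k) (v k)) N = Cplus (csum u N) (csum v N).
Proof. induction N; simpl. - cring. - rewrite IHN. cring. Qed.

Lemma csum_scal a u N : csum (fun k => Cmult a (u k)) N = Cmult a (csum u N).
Proof. induction N; simpl. - cring. - rewrite IHN. cring. Qed.

Lemma csum_minus u v N : csum (fun k => Cminus (u k) (v k)) N = Cminus (csum u N) (csum v N).
Proof. induction N; simpl. - cring. - rewrite IHN. cring. Qed.

Lemma csum_eq0 u N : (forall k, (k < N)%nat -> u k = RtoC 0) -> csum u N = RtoC 0.
Proof. induction N; simpl; intros H; auto. rewrite IHN, H; auto. cring. Qed.

Lemma Re_csum u N : Re (csum u N) = rsum (fun k => Re (u k)) N.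
Proof. induction N; simpl; auto. rewrite <- IHN. reflexivity. Qed.

Lemma Im_csum u N : Im (csum u N) = rsum (fun k => Im (u k)) N.
Proof. induction N; simpl; auto. rewrite <- IHN. reflexivity. Qed.

Lemma Cconj_csum u N : Cconj (csum u N) = csum (fun k => Cconj (u k)) N.
Proof. induction N; simpl. - cring. - rewrite <- IHN. cring. Qed.

Lemma csum_extend u N N' : (N <= N')%nat -> (forall k, (N <= k < N')%nat -> u k = RtoC 0) ->
  csum u N' = csum u N.
Proof. intros Hle. induction Hle; intros H; auto. simpl. rewrite IHHle, H; [cring|lia|].
  intros; apply H; lia. Qed.

Lemma csum_first u N : csum u (S N) = Cplus (u 0%nat) (csum (fun k => u (S k)) N).
Proof. induction N.
  - simpl. cring.
  - change (csum u (S (S N))) with (Cplus (csum u (S N)) (u (S N))). rewrite IHN. simpl. cring. Qed.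

Lemma csum_single u N a : (a < N)%nat -> (forall k, (k < N)%nat -> k <> a -> u k = RtoC 0) ->
  csum u N = u a.
Proof. induction N; intros Ha H; [lia|]. simpl. destruct (Nat.eq_dec a N).
  - subst. rewrite csum_eq0. + cring. + intros; apply H; lia.
  - rewrite IHN by (auto; lia). rewrite (H N) by lia. cring. Qed.

Lemma csum_rev u N : csum u N = csum (fun k => u (N - 1 - k)%nat) N.
Proof. induction N; auto. rewrite (csum_first (fun k => u (S N - 1 - k)%nat)).
  change (csum u (S N)) with (Cplus (csum u N) (u N)). rewrite IHN. replace (S N - 1 - 0)%nat with N by lia.
  rewrite (csum_ext (fun k => u (S N - 1 - S k)%nat) (fun k => u (N - 1 - k)%nat)).
  - cring. - intros; f_equal; lia. Qed.

Lemma Cmod2_csum_le u K : Cmod (csum u K) ^ 2 <= INR K * rsum (fun k => Cmod (u k) ^ 2) K.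
Proof. induction K.
  - rewrite Cmod2_alt. simpl. lra.
  - change (csum u (S K)) with (Cplus (csum u K) (u K)).
    change (rsum (fun k => Cmod (u k) ^ 2) (S K)) with (rsum (fun k => Cmod (u k) ^ 2) K + Cmod (u K) ^ 2).
    rewrite S_INR. set (A := csum u K) in *. set (S := rsum (fun k => Cmod (u k) ^ 2) K) in *.
    assert (0 <= S) by (apply rsum_nonneg; intros; apply Cmod2_nonneg).
    pose proof (pos_INR K). set (k := INR K) in *.
    rewrite !Cmod2_alt in *. destruct A as [a1 a2], (u K) as [b1 b2]; unfold Cplus, Re, Im in *; cbn [fst snd] in *.
    (* Cauchy-Schwarz step: [k |A + b|^2 <= (k+1) |A|^2 + k (k+1) |b|^2] *)
    assert (k * ((a1+b1)^2 + (a2+b2)^2) <= (k+1) * (a1^2+a2^2) + k*(k+1)*(b1^2+b2^2)).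
    { pose proof (pow2_ge_0 (a1 - k*b1)); pose proof (pow2_ge_0 (a2 - k*b2)). nra. }
    destruct (Req_dec k 0) as [E|E].
    + rewrite E in *. assert (a1 = 0) by nra. assert (a2 = 0) by nra. subst a1 a2. nra.
    + apply Rmult_le_reg_l with k; [lra|].
      assert ((k+1) * (a1^2+a2^2) <= (k+1) * (k * S)) by (apply Rmult_le_compat_l; lra). nra. Qed.

End ComplexSums.

(** * Square-summable coefficient arrays *)

Definition cadd (f g : coefs) : coefs := fun i j => Cplus (f i j) (g i j).
Definition cscal (c : C) (f : coefs) : coefs := fun i j => Cmult c (f i j).
Definition czero : coefs := fun _ _ => RtoC 0.
Definition fsum (K : nat) (F : nat -> coefs) : coefs := fun i j => csum (fun k => F k i j) K.

(** [sh a b g] is [z^a w^b g]. *)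
Definition sh (a b : nat) (g : coefs) : coefs := fun i j =>
  if (a <=? i)%nat then (if (b <=? j)%nat then g (i - a)%nat (j - b)%nat else RtoC 0) else RtoC 0.

Definition rsum2 (U : nat -> nat -> R) N := rsum (fun i => rsum (fun j => U i j) N) N.

Lemma coefs_ext (f g : coefs) : (forall i j, f i j = g i j) -> f = g.
Proof. intros H. apply functional_extensionality; intros i;
  apply functional_extensionality; intros j; auto. Qed.

Section DoubleSums.
Implicit Types (U V : nat -> nat -> R).

Lemma rsum2_ext U V N : (forall i j, U i j = V i j) -> rsum2 U N = rsum2 V N.
Proof. intros H; apply rsum_ext; intros; apply rsum_ext; intros; auto. Qed.

Lemma rsum2_le U V N : (forall i j, (i < N)%nat -> (j < N)%nat -> U i j <= V i j) ->
  rsum2 U N <= rsum2 V N.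
Proof. intros H. apply rsum_le; intros. apply rsum_le; intros; auto. Qed.

Lemma rsum2_plus U V N : rsum2 (fun i j => U i j + V i j) N = rsum2 U N + rsum2 V N.
Proof. unfold rsum2. rewrite <- rsum_plus. apply rsum_ext; intros. apply rsum_plus. Qed.

Lemma rsum2_scal a U N : rsum2 (fun i j => a * U i j) N = a * rsum2 U N.
Proof. unfold rsum2. rewrite <- rsum_scal. apply rsum_ext; intros. apply rsum_scal. Qed.

Lemma rsum2_lin a b U V N :
  rsum2 (fun i j => a * U i j + b * V i j) N = a * rsum2 U N + b * rsum2 V N.
Proof. rewrite rsum2_plus, !rsum2_scal. reflexivity. Qed.

Lemma rsum2_nonneg U N : (forall i j, 0 <= U i j) -> 0 <= rsum2 U N.
Proof. intros H. apply rsum_nonneg; intros. apply rsum_nonneg; auto. Qed.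

Lemma rsum2_le_mono U N N' : (N <= N')%nat -> (forall i j, 0 <= U i j) -> rsum2 U N <= rsum2 U N'.
Proof. intros Hl H. apply Rle_trans with (rsum (fun i => rsum (fun j => U i j) N') N).
  - apply rsum_le; intros. apply rsum_le_mono; auto.
  - apply rsum_le_mono; auto. intros; apply rsum_nonneg; auto. Qed.

Lemma is_lim_seq_rsum2 (W : nat -> nat -> nat -> R) U N :
  (forall i j, is_lim_seq (fun m => W m i j) (U i j)) ->
  is_lim_seq (fun m => rsum2 (W m) N) (rsum2 U N).
Proof. intros H. apply (is_lim_seq_rsum (fun m i => rsum (fun j => W m i j) N)). intros i.
  apply (is_lim_seq_rsum (fun m j => W m i j)). auto. Qed.

End DoubleSums.

Lemma psum2_rsum2 f N : psum2 f N = rsum2 (fun i j => Cmod (f i j) ^ 2) N.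
Proof. reflexivity. Qed.

Lemma psum2_ext f g N : (forall i j, f i j = g i j) -> psum2 f N = psum2 g N.
Proof. intros H. apply rsum2_ext; intros; rewrite H; auto. Qed.

Lemma psum2_nonneg f N : 0 <= psum2 f N.
Proof. apply rsum2_nonneg; intros; apply Cmod2_nonneg. Qed.

Lemma psum2_le_mono f N N' : (N <= N')%nat -> psum2 f N <= psum2 f N'.
Proof. intros; apply rsum2_le_mono; auto; intros; apply Cmod2_nonneg. Qed.

Lemma Cmod2_le_psum2 f i j : Cmod (f i j) ^ 2 <= psum2 f (S (Nat.max i j)).
Proof. eapply Rle_trans; [|apply rsum_term_le with (k := i)].
  - apply rsum_term_le with (u := fun j => Cmod (f i j) ^ 2). intros; apply Cmod2_nonneg. lia.
  - intros; apply rsum_nonneg; intros; apply Cmod2_nonneg.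
  - lia. Qed.

Lemma psum2_zero N : psum2 czero N = 0.
Proof. apply rsum_eq0; intros; apply rsum_eq0; intros. apply Cmod2_0. Qed.

Lemma Cmod2_add_le_weighted a b t : 0 < t ->
  Cmod (Cplus a b) ^ 2 <= (1 + t) * Cmod a ^ 2 + (1 + / t) * Cmod b ^ 2.
Proof. intros Ht. rewrite !Cmod2_alt. destruct a as [a1 a2], b as [b1 b2]; unfold Cplus, Re, Im; cbn [fst snd].
  apply Rmult_le_reg_l with t; [lra|].
  replace (t * ((1 + t) * (a1 ^ 2 + a2 ^ 2) + (1 + / t) * (b1 ^ 2 + b2 ^ 2)))
    with (t * (1 + t) * (a1 ^ 2 + a2 ^ 2) + (t + 1) * (b1 ^ 2 + b2 ^ 2)) by (field; lra).
  pose proof (pow2_ge_0 (t * a1 - b1)); pose proof (pow2_ge_0 (t * a2 - b2)). nra. Qed.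

Lemma Cmod2_add_le a b : Cmod (Cplus a b) ^ 2 <= 2 * Cmod a ^ 2 + 2 * Cmod b ^ 2.
Proof. pose proof (Cmod2_add_le_weighted a b 1 ltac:(lra)). rewrite Rinv_1 in H. lra. Qed.

Lemma Cmod2_sub_le a b : Cmod (Cminus a b) ^ 2 <= 2 * Cmod a ^ 2 + 2 * Cmod b ^ 2.
Proof. unfold Cminus. rewrite <- (Cmod_opp b). apply Cmod2_add_le. Qed.

Lemma psum2_add_le_weighted f g t N : 0 < t ->
  psum2 (cadd f g) N <= (1 + t) * psum2 f N + (1 + / t) * psum2 g N.
Proof. intros Ht. rewrite !psum2_rsum2, <- !rsum2_scal, <- rsum2_plus.
  apply rsum2_le; intros. apply Cmod2_add_le_weighted; auto. Qed.

Lemma psum2_add_le f g N : psum2 (cadd f g) N <= 2 * psum2 f N + 2 * psum2 g N.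
Proof. rewrite !psum2_rsum2, <- !rsum2_scal, <- rsum2_plus.
  apply rsum2_le; intros. apply Cmod2_add_le. Qed.

Lemma psum2_sub_le f g N : psum2 (csub f g) N <= 2 * psum2 f N + 2 * psum2 g N.
Proof. rewrite !psum2_rsum2, <- !rsum2_scal, <- rsum2_plus.
  apply rsum2_le; intros. apply Cmod2_sub_le. Qed.

Lemma psum2_scal c f N : psum2 (cscal c f) N = Cmod c ^ 2 * psum2 f N.
Proof. rewrite !psum2_rsum2, <- rsum2_scal. apply rsum2_ext; intros. apply Cmod2_mult. Qed.

Lemma psum2_fsum_le K F N : psum2 (fsum K F) N <= INR K * rsum (fun k => psum2 (F k) N) K.
Proof. apply Rle_trans with (rsum2 (fun i j => INR K * rsum (fun k => Cmod (F k i j) ^ 2) K) N).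
  - apply rsum2_le; intros. apply Cmod2_csum_le.
  - rewrite rsum2_scal. apply Req_le. f_equal. unfold rsum2.
    transitivity (rsum (fun i => rsum (fun k => rsum (fun j => Cmod (F k i j) ^ 2) N) K) N).
    + apply rsum_ext; intros i _. apply (rsum_swap (fun j k => Cmod (F k i j) ^ 2)).
    + apply (rsum_swap (fun i k => rsum (fun j => Cmod (F k i j) ^ 2) N)). Qed.

Lemma psum2_sh_le a b g N : psum2 (sh a b g) N <= psum2 g N.
Proof. unfold psum2, sh.
  transitivity (rsum (fun i => if (a <=? i)%nat
    then rsum (fun j => Cmod (g (i - a)%nat j) ^ 2) (N - b) else 0) N).
  - apply Req_le. apply rsum_ext; intros i _. destruct (a <=? i)%nat.
    + rewrite <- rsum_shift. apply rsum_ext; intros j _. destruct (b <=? j)%nat; auto. apply Cmod2_0.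
    + apply rsum_eq0; intros. apply Cmod2_0.
  - rewrite (rsum_shift a (fun i' => rsum (fun j => Cmod (g i' j) ^ 2) (N - b))).
    eapply Rle_trans; [apply rsum_le; intros; apply rsum_le_mono with (N' := N)|apply rsum_le_mono].
    + lia.
    + intros; apply Cmod2_nonneg.
    + lia.
    + intros; apply rsum_nonneg; intros; apply Cmod2_nonneg. Qed.

Lemma mulz_sh g : mulz g = sh 1 0 g.
Proof. apply coefs_ext; intros i j. unfold mulz, sh. destruct i; simpl; auto.
  rewrite !Nat.sub_0_r. auto. Qed.

Lemma sh_sh a b c d g : sh a b (sh c d g) = sh (a + c) (b + d) g.
Proof. apply coefs_ext; intros i j. unfold sh.
  destruct (Nat.leb_spec a i), (Nat.leb_spec b j), (Nat.leb_spec (a+c) i), (Nat.leb_spec (b+d) j),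
    (Nat.leb_spec c (i-a)), (Nat.leb_spec d (j-b)); auto; try lia. f_equal; lia. Qed.

Lemma psum2_mulz_le f N : psum2 (mulz f) N <= psum2 f N.
Proof. rewrite mulz_sh. apply psum2_sh_le. Qed.

Lemma in_H2_add f g : in_H2 f -> in_H2 g -> in_H2 (cadd f g).
Proof. intros [A HA] [B HB]. exists (2*A+2*B). intros N.
  pose proof (psum2_add_le f g N). pose proof (HA N); pose proof (HB N); lra. Qed.

Lemma in_H2_sub f g : in_H2 f -> in_H2 g -> in_H2 (csub f g).
Proof. intros [A HA] [B HB]. exists (2*A+2*B). intros N.
  pose proof (psum2_sub_le f g N). pose proof (HA N); pose proof (HB N); lra. Qed.

Lemma in_H2_scal c f : in_H2 f -> in_H2 (cscal c f).
Proof. intros [A HA]. exists (Cmod c ^2 * A). intros N. rewrite psum2_scal.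
  apply Rmult_le_compat_l; auto. apply Cmod2_nonneg. Qed.

Lemma in_H2_zero : in_H2 czero.
Proof. exists 0. intros; rewrite psum2_zero; lra. Qed.

Lemma in_H2_fsum K F : (forall k, (k < K)%nat -> in_H2 (F k)) -> in_H2 (fsum K F).
Proof. intros H.
  assert (exists B, forall k, (k < K)%nat -> forall N, psum2 (F k) N <= B) as [B HB].
  { clear -H. induction K.
    - exists 0; intros; lia.
    - destruct IHK as [B HB]. { intros; apply H; lia. }
      destruct (H K ltac:(lia)) as [B' HB'].
      exists (Rmax B B'). intros k Hk N. destruct (Nat.eq_dec k K).
      + subst. pose proof (HB' N). pose proof (Rmax_r B B'); lra.
      + pose proof (HB k ltac:(lia) N). pose proof (Rmax_l B B'); lra. }
  exists (INR K * (INR K * B)). intros N. eapply Rle_trans; [apply psum2_fsum_le|].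
  apply Rmult_le_compat_l; [apply pos_INR|]. rewrite <- rsum_const. apply rsum_le; auto. Qed.

Lemma in_H2_sh a b g : in_H2 g -> in_H2 (sh a b g).
Proof. intros [B HB]; exists B; intros N. pose proof (psum2_sh_le a b g N); pose proof (HB N); lra. Qed.

Lemma in_H2_mulz g : in_H2 g -> in_H2 (mulz g).
Proof. rewrite mulz_sh. apply in_H2_sh. Qed.

Lemma in_H2_finite_support f D : (forall i j, (D < i)%nat \/ (D < j)%nat -> f i j = RtoC 0) -> in_H2 f.
Proof. intros H. exists (psum2 f (S D)). intros N. destruct (Nat.le_ge_cases N (S D)).
  - apply psum2_le_mono; auto.
  - apply Req_le. unfold psum2. rewrite (rsum_extend _ (S D) N); auto.
    + apply rsum_ext; intros. apply rsum_extend; auto. intros. rewrite H by lia. apply Cmod2_0.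
    + intros. apply rsum_eq0; intros. rewrite H by lia. apply Cmod2_0. Qed.

(** * Norm and inner product *)

Definition sqnorm (f : coefs) : R := real (Lim_seq (psum2 f)).

Lemma is_lim_seq_unique_R u (a b : R) : is_lim_seq u a -> is_lim_seq u b -> a = b.
Proof. intros Ha Hb. apply is_lim_seq_unique in Ha. apply is_lim_seq_unique in Hb.
  assert (E : Finite a = Finite b) by congruence. inversion E; reflexivity. Qed.

Lemma is_lim_seq_le_const u (a B : R) : (forall n, u n <= B) -> is_lim_seq u a -> a <= B.
Proof. intros H Ha. exact (is_lim_seq_le u (fun _ => B) a B H Ha (is_lim_seq_const B)). Qed.

Lemma is_lim_seq_sqnorm f : in_H2 f -> is_lim_seq (psum2 f) (sqnorm f).
Proof. intros [B HB]. apply Lim_seq_correct'.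
  apply ex_finite_lim_seq_incr with B; auto. intros; apply psum2_le_mono; lia. Qed.

Lemma psum2_le_sqnorm f N : in_H2 f -> psum2 f N <= sqnorm f.
Proof. intros H. apply is_lim_seq_incr_compare; [apply is_lim_seq_sqnorm; auto|].
  intros; apply psum2_le_mono; lia. Qed.

Lemma sqnorm_le f B : (forall N, psum2 f N <= B) -> sqnorm f <= B.
Proof. intros H. apply is_lim_seq_le_const with (psum2 f); auto.
  apply is_lim_seq_sqnorm. exists B; auto. Qed.

Lemma sqnorm_nonneg f : in_H2 f -> 0 <= sqnorm f.
Proof. intros H. pose proof (psum2_le_sqnorm f 0 H). pose proof (psum2_nonneg f 0). lra. Qed.

Lemma sqnorm_eq0 f : in_H2 f -> sqnorm f = 0 -> f = czero.
Proof. intros Hf H0. apply coefs_ext; intros i j. apply Cmod2_eq0.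
  pose proof (Cmod2_le_psum2 f i j). pose proof (psum2_le_sqnorm f (S (Nat.max i j)) Hf). lra. Qed.

Lemma sqnorm_sub_comm f g : sqnorm (csub f g) = sqnorm (csub g f).
Proof. unfold sqnorm. f_equal. apply Lim_seq_ext; intros N. apply rsum2_ext; intros i j.
  unfold csub. rewrite <- Cmod_opp. f_equal. f_equal. cring. Qed.

Lemma sqnorm_scal c f : in_H2 f -> sqnorm (cscal c f) = Cmod c ^ 2 * sqnorm f.
Proof. intros Hf. eapply is_lim_seq_unique_R. { apply is_lim_seq_sqnorm; auto using in_H2_scal. }
  eapply is_lim_seq_ext. { intros N. symmetry. apply psum2_scal. }
  exact (is_lim_seq_scal_l _ _ _ (is_lim_seq_sqnorm f Hf)). Qed.

Lemma sqnorm_add_le_weighted f g t : in_H2 f -> in_H2 g -> 0 < t ->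
  sqnorm (cadd f g) <= (1 + t) * sqnorm f + (1 + / t) * sqnorm g.
Proof. intros Hf Hg Ht. apply sqnorm_le. intros N.
  pose proof (psum2_add_le_weighted f g t N Ht).
  pose proof (psum2_le_sqnorm f N Hf). pose proof (psum2_le_sqnorm g N Hg).
  assert (0 < / t) by (apply Rinv_0_lt_compat; lra). nra. Qed.

Definition clim (u : nat -> C) (l : C) :=
  is_lim_seq (fun N => Re (u N)) (Re l) /\ is_lim_seq (fun N => Im (u N)) (Im l).

Lemma clim_unique u a b : clim u a -> clim u b -> a = b.
Proof. intros [H1 H2] [H3 H4]. apply injective_projections; eapply is_lim_seq_unique_R; eauto. Qed.

Lemma clim_ext u v l : (forall n, u n = v n) -> clim u l -> clim v l.
Proof. intros H [H1 H2]; split; eapply is_lim_seq_ext; eauto; intros; simpl; rewrite H; auto. Qed.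

Lemma clim_plus u v a b : clim u a -> clim v b -> clim (fun n => Cplus (u n) (v n)) (Cplus a b).
Proof. intros [H1 H2] [H3 H4]; split; apply is_lim_seq_plus'; auto. Qed.

Lemma clim_scal c u a : clim u a -> clim (fun n => Cmult c (u n)) (Cmult c a).
Proof. intros [H1 H2]; split; unfold Re, Im in *; simpl.
  - apply is_lim_seq_minus'; exact (is_lim_seq_scal_l _ _ _ H1) || exact (is_lim_seq_scal_l _ _ _ H2).
  - apply is_lim_seq_plus'; exact (is_lim_seq_scal_l _ _ _ H2) || exact (is_lim_seq_scal_l _ _ _ H1). Qed.

Lemma clim_conj u a : clim u a -> clim (fun n => Cconj (u n)) (Cconj a).
Proof. intros [H1 H2]; split; auto. exact (proj1 (is_lim_seq_opp _ _) H2). Qed.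

Definition csum2 (u : nat -> nat -> C) N := csum (fun i => csum (fun j => u i j) N) N.

Section ComplexDoubleSums.
Implicit Types (u v : nat -> nat -> C).

Lemma csum2_ext u v N : (forall i j, u i j = v i j) -> csum2 u N = csum2 v N.
Proof. intros H; apply csum_ext; intros; apply csum_ext; intros; auto. Qed.

Lemma csum2_plus u v N : csum2 (fun i j => Cplus (u i j) (v i j)) N = Cplus (csum2 u N) (csum2 v N).
Proof. unfold csum2. rewrite <- csum_plus. apply csum_ext; intros. apply csum_plus. Qed.

Lemma csum2_scal a u N : csum2 (fun i j => Cmult a (u i j)) N = Cmult a (csum2 u N).
Proof. unfold csum2. rewrite <- csum_scal. apply csum_ext; intros. apply csum_scal. Qed.

Lemma Cconj_csum2 u N : Cconj (csum2 u N) = csum2 (fun i j => Cconj (u i j)) N.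
Proof. unfold csum2. rewrite Cconj_csum. apply csum_ext; intros. apply Cconj_csum. Qed.

Lemma Re_csum2 u N : Re (csum2 u N) = rsum2 (fun i j => Re (u i j)) N.
Proof. unfold csum2, rsum2. rewrite Re_csum. apply rsum_ext; intros. apply Re_csum. Qed.

Lemma Im_csum2 u N : Im (csum2 u N) = rsum2 (fun i j => Im (u i j)) N.
Proof. unfold csum2, rsum2. rewrite Im_csum. apply rsum_ext; intros. apply Im_csum. Qed.

End ComplexDoubleSums.

Lemma pinner_csum2 f g N : pinner f g N = csum2 (fun i j => Cmult (f i j) (Cconj (g i j))) N.
Proof. reflexivity. Qed.

Definition Ci : C := (0, 1).

(* Defined by polarization, so that the convergence of [pinner f g] reduces to that of
   the squared norms. *)
Definition ip (f g : coefs) : C :=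
  ((sqnorm (cadd f g) - sqnorm (csub f g)) / 4,
   (sqnorm (cadd f (cscal Ci g)) - sqnorm (csub f (cscal Ci g))) / 4).

Lemma Re_pinner f g N : Re (pinner f g N) = (psum2 (cadd f g) N - psum2 (csub f g) N) / 4.
Proof. rewrite pinner_csum2, Re_csum2, !psum2_rsum2.
  match goal with |- _ = (?A - ?B) / 4 => replace ((A - B) / 4) with (/4 * A + (-/4) * B) by field end.
  rewrite <- rsum2_lin. apply rsum2_ext; intros. rewrite !Cmod2_alt. unfold cadd, csub. cexpand. field. Qed.

Lemma Im_pinner f g N :
  Im (pinner f g N) = (psum2 (cadd f (cscal Ci g)) N - psum2 (csub f (cscal Ci g)) N) / 4.
Proof. rewrite pinner_csum2, Im_csum2, !psum2_rsum2.
  match goal with |- _ = (?A - ?B) / 4 => replace ((A - B) / 4) with (/4 * A + (-/4) * B) by field end.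
  rewrite <- rsum2_lin. apply rsum2_ext; intros. rewrite !Cmod2_alt. unfold cadd, csub, cscal, Ci.
  cexpand. field. Qed.

Lemma clim_pinner f g : in_H2 f -> in_H2 g -> clim (pinner f g) (ip f g).
Proof. intros Hf Hg. assert (HCi : in_H2 (cscal Ci g)) by (apply in_H2_scal; auto).
  split; unfold ip, Re, Im; simpl.
  - eapply is_lim_seq_ext. { intros; symmetry; apply Re_pinner. }
    apply (is_lim_seq_scal_r _ (/ 4) (Finite _)). apply is_lim_seq_minus'; apply is_lim_seq_sqnorm.
    + apply in_H2_add; auto. + apply in_H2_sub; auto.
  - eapply is_lim_seq_ext. { intros; symmetry; apply Im_pinner. }
    apply (is_lim_seq_scal_r _ (/ 4) (Finite _)). apply is_lim_seq_minus'; apply is_lim_seq_sqnorm.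
    + apply in_H2_add; auto. + apply in_H2_sub; auto. Qed.

Lemma orth_ip f g : in_H2 f -> in_H2 g -> (orth f g <-> ip f g = RtoC 0).
Proof. intros Hf Hg. split.
  - intros H. eapply clim_unique; [apply clim_pinner; auto|exact H].
  - intros E. pose proof (clim_pinner f g Hf Hg) as H. rewrite E in H. exact H. Qed.

Lemma ip_unique f g a : in_H2 f -> in_H2 g -> clim (pinner f g) a -> ip f g = a.
Proof. intros; eapply clim_unique; eauto using clim_pinner. Qed.

Section InnerProduct.
Variables f g h : coefs.
Hypotheses (Hf : in_H2 f) (Hg : in_H2 g) (Hh : in_H2 h).

Lemma ip_add_l : ip (cadd f g) h = Cplus (ip f h) (ip g h).
Proof. apply ip_unique; auto using in_H2_add.
  eapply clim_ext; [|apply clim_plus; apply clim_pinner; eauto].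
  intros N. rewrite !pinner_csum2, <- csum2_plus. apply csum2_ext; intros. unfold cadd. cring. Qed.

Lemma ip_scal_l c : ip (cscal c f) h = Cmult c (ip f h).
Proof. apply ip_unique; auto using in_H2_scal.
  eapply clim_ext; [|apply clim_scal; apply clim_pinner; eauto].
  intros N. rewrite !pinner_csum2, <- csum2_scal. apply csum2_ext; intros. unfold cscal. cring. Qed.

Lemma ip_conj : ip g f = Cconj (ip f g).
Proof. apply ip_unique; auto. eapply clim_ext; [|apply clim_conj; apply clim_pinner; eauto].
  intros N. rewrite !pinner_csum2, Cconj_csum2. apply csum2_ext; intros. cring. Qed.

Lemma sqnorm_sub_scal t : sqnorm (csub f (cscal t g)) =
  sqnorm f - 2 * Re (Cmult (Cconj t) (ip f g)) + Cmod t ^ 2 * sqnorm g.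
Proof. eapply is_lim_seq_unique_R. { apply is_lim_seq_sqnorm, in_H2_sub, in_H2_scal; auto. }
  eapply is_lim_seq_ext with (u := fun N => psum2 f N
    - 2 * Re (Cmult (Cconj t) (pinner f g N)) + Cmod t ^ 2 * psum2 g N).
  - intros N. rewrite pinner_csum2, <- csum2_scal, Re_csum2, !psum2_rsum2.
    match goal with |- ?A - 2 * ?B + ?c * ?D = _ =>
      replace (A - 2 * B + c * D) with (1 * A + (-2) * B + c * D) by ring end.
    rewrite <- rsum2_lin, <- (Rmult_1_l (rsum2 _ N)), <- rsum2_lin.
    apply rsum2_ext; intros. rewrite !Cmod2_alt. unfold csub, cscal. cexpand. ring.
  - apply is_lim_seq_plus'; [apply is_lim_seq_minus'|].
    + apply is_lim_seq_sqnorm; auto.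
    + exact (is_lim_seq_scal_l _ _ _ (proj1 (clim_scal (Cconj t) _ _ (clim_pinner f g Hf Hg)))).
    + exact (is_lim_seq_scal_l _ _ _ (is_lim_seq_sqnorm g Hg)). Qed.

Lemma sqnorm_parallelogram :
  sqnorm (cadd f g) + sqnorm (csub f g) = 2 * sqnorm f + 2 * sqnorm g.
Proof. eapply is_lim_seq_unique_R.
  - apply is_lim_seq_plus'; apply is_lim_seq_sqnorm; auto using in_H2_add, in_H2_sub.
  - eapply is_lim_seq_ext with (u := fun N => 2 * psum2 f N + 2 * psum2 g N).
    + intros N. rewrite !psum2_rsum2, <- !rsum2_scal, <- !rsum2_plus. apply rsum2_ext; intros.
      rewrite !Cmod2_alt. unfold cadd, csub. cexpand. ring.
    + apply is_lim_seq_plus'; apply (is_lim_seq_scal_l _ 2 (Finite _)); apply is_lim_seq_sqnorm; auto. Qed.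

End InnerProduct.

Lemma ip_zero_l h : in_H2 h -> ip czero h = RtoC 0.
Proof. intros Hh. replace czero with (cscal (RtoC 0) czero) by (apply coefs_ext; intros; cring).
  rewrite ip_scal_l; auto using in_H2_zero. cring. Qed.

Lemma orth_lin_l x x' y c : orth x y -> orth x' y -> orth (cadd x (cscal c x')) y.
Proof. intros H1 H2. assert (E : RtoC 0 = Cplus (RtoC 0) (Cmult c (RtoC 0))) by cring.
  unfold orth. change (clim (pinner (cadd x (cscal c x')) y) (RtoC 0)). rewrite E.
  eapply clim_ext; [|apply clim_plus; [exact H1|apply (clim_scal c); exact H2]].
  intros N. rewrite !pinner_csum2, <- csum2_scal, <- csum2_plus. apply csum2_ext; intros.
  unfold cadd, cscal. cring. Qed.

Lemma orth_lin_r y x x' c : orth y x -> orth y x' -> orth y (cadd x (cscal c x')).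
Proof. intros H1 H2. assert (E : RtoC 0 = Cplus (RtoC 0) (Cmult (Cconj c) (RtoC 0))) by cring.
  unfold orth. change (clim (pinner y (cadd x (cscal c x'))) (RtoC 0)). rewrite E.
  eapply clim_ext; [|apply clim_plus; [exact H1|apply (clim_scal (Cconj c)); exact H2]].
  intros N. rewrite !pinner_csum2, <- csum2_scal, <- csum2_plus. apply csum2_ext; intros.
  unfold cadd, cscal. cring. Qed.

Lemma eq0_of_orth_dense x : in_H2 x ->
  (forall eps, 0 < eps -> exists y, in_H2 y /\ ip y x = RtoC 0 /\ sqnorm (csub x y) <= eps) ->
  x = czero.
Proof. intros Hx H. apply sqnorm_eq0; auto. pose proof (sqnorm_nonneg x Hx).
  enough (sqnorm x <= 0) by lra. apply Rle_plus_epsilon. intros eps He.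
  destruct (H eps He) as [y [Hy [Hyx Hn]]].
  (* Pythagoras: [|x - y|^2 = |x|^2 + |y|^2] since [y] is orthogonal to [x] *)
  pose proof (sqnorm_sub_scal x y Hx Hy (RtoC 1)) as P.
  rewrite (coefs_ext (cscal (RtoC 1) y) y), ip_conj, Hyx in P by (auto; intros; unfold cscal; cring).
  replace (Re (Cmult (Cconj (RtoC 1)) (Cconj (RtoC 0)))) with 0 in P by (simpl; ring).
  pose proof (sqnorm_nonneg y Hy). rewrite Cmod2_alt in P. simpl in P. lra. Qed.

(** * Completeness and orthogonal projection *)

Lemma clim_coefs_psum2 (s : nat -> coefs) u g N :
  (forall i j, clim (fun m => s m i j) (u i j)) ->
  is_lim_seq (fun m => psum2 (csub (s m) g) N) (psum2 (csub u g) N).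
Proof. intros H. apply is_lim_seq_rsum2. intros i j. unfold csub.
  destruct (H i j) as [H1 H2].
  eapply is_lim_seq_ext with (u := fun m => (Re (s m i j) - Re (g i j)) ^ 2 + (Im (s m i j) - Im (g i j)) ^ 2).
  { intros m. rewrite Cmod2_alt. reflexivity. }
  rewrite Cmod2_alt. apply is_lim_seq_plus'; simpl; apply is_lim_seq_mult';
    try (apply is_lim_seq_mult'; [|apply is_lim_seq_const]);
    apply is_lim_seq_minus'; auto; apply is_lim_seq_const. Qed.

Lemma cauchy_coefs (s : nat -> coefs) i j : (forall n, in_H2 (s n)) ->
  (forall eps, 0 < eps -> exists K, forall n m, (K <= n)%nat -> (K <= m)%nat ->
     sqnorm (csub (s n) (s m)) <= eps) ->
  exists a, clim (fun m => s m i j) a.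
Proof. intros Hs Hc.
  assert (Hd : forall e, 0 < e -> exists K, forall n m, (K <= n)%nat -> (K <= m)%nat ->
     Cmod (Cminus (s n i j) (s m i j)) ^ 2 <= e).
  { intros e He. destruct (Hc e He) as [K HK]. exists K. intros n m Hn Hm.
    pose proof (HK n m Hn Hm). pose proof (Cmod2_le_psum2 (csub (s n) (s m)) i j).
    pose proof (psum2_le_sqnorm (csub (s n) (s m)) (S (Nat.max i j)) (in_H2_sub _ _ (Hs n) (Hs m))).
    unfold csub in *. lra. }
  assert (Hcv : forall pr : C -> R, (forall a b, pr (Cminus a b) = pr a - pr b) ->
     (forall z, Rabs (pr z) <= Cmod z) -> ex_finite_lim_seq (fun m => pr (s m i j))).
  { intros pr Hlin Hpr. apply ex_lim_seq_cauchy_corr. intros [e He]; simpl.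
    destruct (Hd (e ^ 2 / 2)) as [K HK]; [nra|]. exists K. intros n m Hn Hm.
    rewrite <- Hlin. eapply Rle_lt_trans; [apply Hpr|].
    pose proof (HK n m Hn Hm). pose proof (Cmod_ge_0 (Cminus (s n i j) (s m i j))). nra. }
  destruct (Hcv Re) as [a1 Ha1]; [reflexivity|apply re_le_Cmod|].
  destruct (Hcv Im) as [a2 Ha2]; [reflexivity| |].
  { intros z. pose proof (Rmax_Cmod z). pose proof (Rmax_r (Rabs (fst z)) (Rabs (snd z))).
    unfold Im. lra. }
  exists (a1, a2). split; assumption. Qed.

Lemma H2_complete (s : nat -> coefs) : (forall n, in_H2 (s n)) ->
  (forall eps, 0 < eps -> exists K, forall n m, (K <= n)%nat -> (K <= m)%nat ->
     sqnorm (csub (s n) (s m)) <= eps) ->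
  exists u, in_H2 u /\
    forall eps, 0 < eps -> exists K, forall n, (K <= n)%nat -> sqnorm (csub u (s n)) <= eps.
Proof. intros Hs Hc.
  set (u := fun i j => proj1_sig (constructive_indefinite_description _ (cauchy_coefs s i j Hs Hc))).
  assert (Hu : forall i j, clim (fun m => s m i j) (u i j)) by (intros; apply proj2_sig).
  assert (Hb : forall eps, 0 < eps -> exists K, forall n N, (K <= n)%nat ->
     psum2 (csub u (s n)) N <= eps).
  { intros eps He. destruct (Hc eps He) as [K HK]. exists K. intros n N Hn.
    apply (is_lim_seq_le_const (fun m => psum2 (csub (s (m + K)%nat) (s n)) N)).
    - intros m. eapply Rle_trans; [apply psum2_le_sqnorm, in_H2_sub; auto|]. apply HK; lia.
    - apply (is_lim_seq_incr_n (fun m => psum2 (csub (s m) (s n)) N) K).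
      apply clim_coefs_psum2; auto. }
  assert (HuH : in_H2 u).
  { destruct (Hb 1 ltac:(lra)) as [K HK]. destruct (Hs K) as [B HB]. exists (2 + 2 * B). intros N.
    rewrite (psum2_ext u (cadd (csub u (s K)) (s K))) by (intros; unfold cadd, csub; cring).
    pose proof (psum2_add_le (csub u (s K)) (s K) N). pose proof (HK K N (le_n K)).
    pose proof (HB N). lra. }
  exists u. split; auto. intros eps He. destruct (Hb eps He) as [K HK].
  exists K. intros n Hn. apply sqnorm_le. auto. Qed.

Lemma inv_INR_S_le eps : 0 < eps -> exists K : nat, forall n, (K <= n)%nat -> / (INR n + 1) <= eps.
Proof. intros He. destruct (archimed_cor1 eps He) as [K [HK HK0]]. exists K. intros n Hn.
  assert (0 < INR K) by (apply lt_0_INR; lia). assert (INR K <= INR n) by (apply le_INR; lia).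
  assert (/ (INR n + 1) <= / INR K) by (apply Rinv_le_contravar; lra). lra. Qed.

Lemma sqnorm_le_of_approx a delta : in_H2 a -> 0 <= delta ->
  (forall eps, 0 < eps -> exists b, in_H2 b /\ sqnorm b <= delta + eps /\ sqnorm (csub a b) <= eps) ->
  sqnorm a <= delta.
Proof. intros Ha Hd H. apply Rle_plus_epsilon. intros e He.
  set (t := e / (2 * (delta + 1))). assert (Ht : 0 < t) by (unfold t; apply Rdiv_lt_0_compat; lra).
  assert (Hti : 0 < / t) by (apply Rinv_0_lt_compat; lra).
  set (eps := e / (2 * (2 + t + / t))).
  assert (Heps : 0 < eps) by (unfold eps; apply Rdiv_lt_0_compat; lra).
  destruct (H eps Heps) as [b [Hb [Hbn Habn]]].
  assert (Hsplit : a = cadd b (csub a b)) by (apply coefs_ext; intros; unfold cadd, csub; cring).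
  pose proof (sqnorm_add_le_weighted b (csub a b) t Hb (in_H2_sub _ _ Ha Hb) Ht) as Hw.
  rewrite <- Hsplit in Hw.
  assert (t * delta <= e / 2).
  { unfold t. apply Rmult_le_reg_r with (2 * (delta + 1)); [lra|].
    field_simplify; [nra|lra]. }
  assert ((2 + t + / t) * eps = e / 2) by (unfold eps; field; split; [lra|nra]).
  nra. Qed.

Lemma sqnorm_sub_le_of_midpoint h a b delta : in_H2 h -> in_H2 a -> in_H2 b ->
  delta <= sqnorm (csub h (cscal (/ 2) (cadd a b))) ->
  sqnorm (csub a b) <= 2 * sqnorm (csub h a) + 2 * sqnorm (csub h b) - 4 * delta.
Proof. intros Hh Ha Hb Hmid.
  pose proof (sqnorm_parallelogram (csub h b) (csub h a) (in_H2_sub _ _ Hh Hb) (in_H2_sub _ _ Hh Ha))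
    as P.
  rewrite (coefs_ext (csub (csub h b) (csub h a)) (csub a b)) in P
    by (intros; unfold csub; cring).
  rewrite (coefs_ext (cadd (csub h b) (csub h a)) (cscal (RtoC 2) (csub h (cscal (/ 2) (cadd a b)))))
    in P by (intros; unfold cadd, csub, cscal; cfield).
  rewrite sqnorm_scal in P by (apply in_H2_sub, in_H2_scal, in_H2_add; auto).
  replace (Cmod (RtoC 2) ^ 2) with 4 in P by (rewrite Cmod2_alt; simpl; ring). lra. Qed.

Lemma orth_of_min w v : in_H2 w -> in_H2 v ->
  (forall t, sqnorm w <= sqnorm (csub w (cscal t v))) -> ip w v = RtoC 0.
Proof. intros Hw Hv Hmin. apply Cmod2_eq0. pose proof (sqnorm_nonneg v Hv).
  set (sg := / (sqnorm v + 1)). assert (Hsg : 0 < sg) by (apply Rinv_0_lt_compat; lra).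
  assert (HsgS : sg * sqnorm v <= 1).
  { unfold sg. apply Rmult_le_reg_l with (sqnorm v + 1); [lra|]. field_simplify; lra. }
  (* minimality along [w - sg * c * v], [c = <w, v>], gives [2 sg |c|^2 <= sg^2 |c|^2 |v|^2] *)
  pose proof (Hmin (Cmult (RtoC sg) (ip w v))) as H1.
  rewrite sqnorm_sub_scal, Cmod2_mult, !Cmod2_alt in H1 by auto. rewrite Cmod2_alt.
  destruct (ip w v) as [c1 c2]. unfold Re, Cmult, Cconj, RtoC in H1. simpl in H1.
  set (q := c1 ^ 2 + c2 ^ 2). assert (0 <= q) by (unfold q; nra).
  assert (2 * sg * q <= sg * q * (sg * sqnorm v)) by (unfold q; nra).
  assert (sg * (q * (sg * sqnorm v)) <= sg * q) by (apply Rmult_le_compat_l; nra).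
  change (q <= 0). nra. Qed.

Section ClosedSubspace.
Variable V : coefs -> Prop.
Hypothesis V_H2 : forall v, V v -> in_H2 v.
Hypothesis V_zero : V czero.
Hypothesis V_lin : forall u v c, V u -> V v -> V (cadd u (cscal c v)).
Hypothesis V_closed : forall f, in_H2 f ->
  (forall eps, 0 < eps -> exists v, V v /\ sqnorm (csub f v) <= eps) -> V f.

Lemma exists_minimizing_seq h : in_H2 h -> exists delta (s : nat -> coefs), 0 <= delta /\
  (forall v, V v -> delta <= sqnorm (csub h v)) /\
  (forall n, V (s n) /\ sqnorm (csub h (s n)) <= delta + / (INR n + 1)).
Proof. intros Hh.
  set (E := fun r => exists v, V v /\ r = - sqnorm (csub h v)).
  assert (HE : bound E).
  { exists 0. intros r [v [Hv ->]]. pose proof (sqnorm_nonneg _ (in_H2_sub _ _ Hh (V_H2 v Hv))). lra. }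
  destruct (completeness E HE) as [L [HL1 HL2]]; [exists (- sqnorm (csub h czero)), czero; auto|].
  exists (- L).
  assert (Hseq : forall n : nat, exists v, V v /\ sqnorm (csub h v) <= - L + / (INR n + 1)).
  { intros n. apply NNPP. intros Hn. assert (0 < / (INR n + 1)).
    { apply Rinv_0_lt_compat. pose proof (pos_INR n); lra. }
    assert (L <= L - / (INR n + 1)); [|lra]. apply HL2. intros r [v [Hv ->]].
    assert (~ sqnorm (csub h v) <= - L + / (INR n + 1)) by (intros C; apply Hn; exists v; auto).
    lra. }
  exists (fun n => proj1_sig (constructive_indefinite_description _ (Hseq n))). split; [|split].
  - assert (L <= 0); [|lra]. apply HL2. intros r [v [Hv ->]].
    pose proof (sqnorm_nonneg _ (in_H2_sub _ _ Hh (V_H2 v Hv))). lra.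
  - intros v Hv. assert (- sqnorm (csub h v) <= L) by (apply HL1; exists v; auto). lra.
  - intros n. apply proj2_sig. Qed.

Lemma exists_min_dist h : in_H2 h ->
  exists u, V u /\ forall v, V v -> sqnorm (csub h u) <= sqnorm (csub h v).
Proof. intros Hh. destruct (exists_minimizing_seq h Hh) as [delta [s [Hdelta [Hlow Hs]]]].
  assert (HsH : forall n, in_H2 (s n)) by (intros n; apply V_H2, Hs).
  destruct (H2_complete s HsH) as [u [HuH Hconv]].
  { intros eps He. destruct (inv_INR_S_le (eps / 4)) as [K HK]; [lra|]. exists K. intros n m Hn Hm.
    assert (Hmid : V (cscal (/ 2) (cadd (s n) (s m)))).
    { rewrite (coefs_ext _ (cadd czero (cscal (/ 2) (cadd (s n) (cscal (RtoC 1) (s m))))))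
        by (intros; unfold cadd, cscal, czero; cring).
      apply V_lin; auto. apply V_lin; apply Hs. }
    pose proof (sqnorm_sub_le_of_midpoint h (s n) (s m) delta Hh (HsH n) (HsH m) (Hlow _ Hmid)).
    pose proof (proj2 (Hs n)). pose proof (proj2 (Hs m)). pose proof (HK n Hn). pose proof (HK m Hm).
    lra. }
  assert (HVu : V u).
  { apply V_closed; auto. intros eps He. destruct (Hconv eps He) as [K HK].
    exists (s K). split; [apply Hs|apply HK; lia]. }
  exists u. split; auto. intros v Hv. apply Rle_trans with delta; [|apply Hlow; auto].
  apply sqnorm_le_of_approx; [apply in_H2_sub; auto|auto|].
  intros eps He. destruct (Hconv eps He) as [K1 HK1]. destruct (inv_INR_S_le eps He) as [K2 HK2].
  set (n := Nat.max K1 K2). exists (csub h (s n)). split; [apply in_H2_sub; auto|]. split.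
  - pose proof (proj2 (Hs n)). pose proof (HK2 n ltac:(lia)). lra.
  - rewrite (coefs_ext (csub (csub h u) (csub h (s n))) (csub (s n) u)) by (intros; unfold csub; cring).
    rewrite sqnorm_sub_comm.
    apply HK1; lia. Qed.

Lemma orth_projection h : in_H2 h -> exists u, V u /\ forall v, V v -> ip (csub h u) v = RtoC 0.
Proof. intros Hh. destruct (exists_min_dist h Hh) as [u [Hu Hmin]]. exists u. split; auto.
  intros v Hv. apply orth_of_min; [apply in_H2_sub; auto|auto|]. intros t.
  rewrite (coefs_ext (csub (csub h u) (cscal t v)) (csub h (cadd u (cscal t v)))) by (intros; unfold csub, cadd, cscal; cring).
  apply Hmin, V_lin; auto. Qed.
End ClosedSubspace.

(** * Multiplication by polynomials *)

Program Definition pzero : poly2 := Poly2 (fun _ _ => RtoC 0) 0 _.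

Program Definition pmono (a b : nat) : poly2 :=
  Poly2 (fun i j => if (Nat.eqb i a && Nat.eqb j b)%bool then RtoC 1 else RtoC 0) (Nat.max a b) _.
Next Obligation. destruct (Nat.eqb_spec i a), (Nat.eqb_spec j b); simpl; auto; lia. Qed.

Program Definition padd (q1 q2 : poly2) : poly2 :=
  Poly2 (fun i j => Cplus (pcoef q1 i j) (pcoef q2 i j)) (Nat.max (pdeg q1) (pdeg q2)) _.
Next Obligation. rewrite !pcoef_supp by lia. cring. Qed.

Program Definition pscal (c : C) (q : poly2) : poly2 :=
  Poly2 (fun i j => Cmult c (pcoef q i j)) (pdeg q) _.
Next Obligation. rewrite pcoef_supp by lia. cring. Qed.

Program Definition pmulz (q : poly2) : poly2 :=
  Poly2 (fun i j => match i with O => RtoC 0 | S i' => pcoef q i' j end) (S (pdeg q)) _.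
Next Obligation. destruct i; auto. apply pcoef_supp. lia. Qed.

Definition trunc (N : nat) (h : coefs) : coefs :=
  fun i j => if (Nat.ltb i N && Nat.ltb j N)%bool then h i j else RtoC 0.

Program Definition ptrunc (N : nat) (h : coefs) : poly2 := Poly2 (trunc N h) N _.
Next Obligation. unfold trunc. destruct (Nat.ltb_spec i N), (Nat.ltb_spec j N); simpl; auto; lia. Qed.

Lemma mulp_pmono a b g : mulp (pmono a b) g = sh a b g.
Proof. apply coefs_ext; intros i j. unfold mulp, sh. cbn [pcoef pmono].
  destruct (Nat.leb_spec a i), (Nat.leb_spec b j).
  - rewrite (csum_single _ _ a); [| lia |].
    2:{ intros k Hk Hka. apply csum_eq0; intros l Hl. destruct (Nat.eqb_spec k a); [lia|]. simpl. cring. }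
    rewrite (csum_single _ _ b); [| lia |].
    2:{ intros l Hl Hlb. rewrite Nat.eqb_refl. destruct (Nat.eqb_spec l b); [lia|]. simpl. cring. }
    rewrite !Nat.eqb_refl; simpl. cring.
  - apply csum_eq0; intros k Hk; apply csum_eq0; intros l Hl.
    destruct (Nat.eqb_spec k a), (Nat.eqb_spec l b); simpl; try cring; lia.
  - apply csum_eq0; intros k Hk; apply csum_eq0; intros l Hl.
    destruct (Nat.eqb_spec k a), (Nat.eqb_spec l b); simpl; try cring; lia.
  - apply csum_eq0; intros k Hk; apply csum_eq0; intros l Hl.
    destruct (Nat.eqb_spec k a), (Nat.eqb_spec l b); simpl; try cring; lia. Qed.

Lemma mulp_pzero g : mulp pzero g = czero.
Proof. apply coefs_ext; intros i j. apply csum_eq0; intros; apply csum_eq0; intros; cring. Qed.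

Lemma mulp_padd q1 q2 g : mulp (padd q1 q2) g = cadd (mulp q1 g) (mulp q2 g).
Proof. apply coefs_ext; intros i j. unfold mulp, cadd. rewrite <- csum_plus. apply csum_ext; intros.
  rewrite <- csum_plus. apply csum_ext; intros. simpl. cring. Qed.

Lemma mulp_pscal c q g : mulp (pscal c q) g = cscal c (mulp q g).
Proof. apply coefs_ext; intros i j. unfold mulp, cscal. rewrite <- csum_scal. apply csum_ext; intros.
  rewrite <- csum_scal. apply csum_ext; intros. simpl. cring. Qed.

Lemma mulp_csub q g1 g2 : mulp q (csub g1 g2) = csub (mulp q g1) (mulp q g2).
Proof. apply coefs_ext; intros i j. unfold mulp, csub. rewrite <- csum_minus. apply csum_ext; intros.
  rewrite <- csum_minus. apply csum_ext; intros. cring. Qed.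

Lemma mulz_mulp q g : mulz (mulp q g) = mulp (pmulz q) g.
Proof. apply coefs_ext; intros i j. unfold mulz. destruct i; unfold mulp.
  - apply eq_sym, csum_eq0; intros k Hk. replace k with 0%nat by lia.
    apply csum_eq0; intros. simpl. cring.
  - symmetry. rewrite csum_first.
    rewrite (csum_eq0 (fun l => Cmult (pcoef (pmulz q) 0 l) _)) by (intros; simpl; cring).
    rewrite Cplus_0_l. reflexivity. Qed.

Lemma csum2_extend (U : nat -> nat -> C) N1 N2 M : (N1 <= M)%nat -> (N2 <= M)%nat ->
  (forall k l, (N1 <= k)%nat \/ (N2 <= l)%nat -> U k l = RtoC 0) ->
  csum (fun k => csum (U k) N2) N1 = csum (fun k => csum (U k) M) M.
Proof. intros H1 H2 H. symmetry. rewrite (csum_extend _ N1 M); auto.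
  - apply csum_ext; intros. apply csum_extend; auto. intros; apply H; lia.
  - intros. apply csum_eq0; intros; apply H; lia. Qed.

Lemma mulp_expand q g : mulp q g =
  fsum (S (pdeg q)) (fun a => fsum (S (pdeg q)) (fun b => cscal (pcoef q a b) (sh a b g))).
Proof. apply coefs_ext; intros i j. unfold mulp, fsum, cscal, sh.
  set (d := pdeg q). set (M := S (Nat.max (Nat.max i j) d)).
  set (U := fun k l => if (Nat.leb k i && Nat.leb l j)%bool
    then Cmult (pcoef q k l) (g (i - k)%nat (j - l)%nat) else RtoC 0).
  transitivity (csum (fun k => csum (U k) (S j)) (S i)).
  { apply csum_ext; intros k Hk; apply csum_ext; intros l Hl. unfold U.
    destruct (Nat.leb_spec k i), (Nat.leb_spec l j); simpl; auto; lia. }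
  rewrite (csum2_extend U _ _ M) by (unfold M; try lia; intros k l [Hk|Hl]; unfold U;
    destruct (Nat.leb_spec k i), (Nat.leb_spec l j); simpl; auto; lia).
  transitivity (csum (fun k => csum (U k) (S d)) (S d)).
  2:{ apply csum_ext; intros a Ha; apply csum_ext; intros b Hb. unfold U.
    destruct (Nat.leb_spec a i), (Nat.leb_spec b j); simpl; auto; cring. }
  symmetry. apply csum2_extend; unfold M; try lia. intros k l Hkl. unfold U.
  destruct (Nat.leb_spec k i), (Nat.leb_spec l j); simpl; auto.
  rewrite pcoef_supp by (unfold d in Hkl; lia). cring. Qed.

Lemma mulp_comm q r : mulp q (pcoef r) = mulp r (pcoef q).
Proof. apply coefs_ext; intros i j. unfold mulp. rewrite csum_rev. apply csum_ext; intros k Hk.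
  rewrite csum_rev. apply csum_ext; intros l Hl.
  replace (i - (S i - 1 - k))%nat with k by lia. replace (j - (S j - 1 - l))%nat with l by lia.
  replace (S i - 1 - k)%nat with (i - k)%nat by lia. replace (S j - 1 - l)%nat with (j - l)%nat by lia.
  cring. Qed.

Lemma in_H2_mulp q g : in_H2 g -> in_H2 (mulp q g).
Proof. intros Hg. rewrite mulp_expand.
  apply in_H2_fsum; intros. apply in_H2_fsum; intros. apply in_H2_scal, in_H2_sh; auto. Qed.

Lemma in_H2_pcoef q : in_H2 (pcoef q).
Proof. apply (in_H2_finite_support _ (pdeg q)). apply pcoef_supp. Qed.

Lemma psum2_mulp_le q : exists Cq, 0 <= Cq /\ forall g N, psum2 (mulp q g) N <= Cq * psum2 g N.
Proof. set (K := S (pdeg q)).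
  exists (INR K * rsum (fun a => INR K * rsum (fun b => Cmod (pcoef q a b) ^ 2) K) K). split.
  { apply Rmult_le_pos; [apply pos_INR|]. apply rsum_nonneg; intros.
    apply Rmult_le_pos; [apply pos_INR|]. apply rsum_nonneg; intros; apply Cmod2_nonneg. }
  intros g N. rewrite mulp_expand. fold K. eapply Rle_trans; [apply psum2_fsum_le|].
  rewrite Rmult_assoc. apply Rmult_le_compat_l; [apply pos_INR|].
  rewrite Rmult_comm, <- rsum_scal. apply rsum_le; intros a _.
  eapply Rle_trans; [apply psum2_fsum_le|].
  replace (psum2 g N * (INR K * rsum (fun b => Cmod (pcoef q a b) ^ 2) K))
    with (INR K * rsum (fun b => Cmod (pcoef q a b) ^ 2 * psum2 g N) K).
  2:{ rewrite (rsum_ext _ (fun b => psum2 g N * Cmod (pcoef q a b) ^ 2)) by (intros; ring).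
      rewrite rsum_scal. ring. }
  apply Rmult_le_compat_l; [apply pos_INR|]. apply rsum_le; intros b _. rewrite psum2_scal.
  apply Rmult_le_compat_l; [apply Cmod2_nonneg|]. apply psum2_sh_le. Qed.

Lemma psum2_trunc_err h N M : in_H2 h -> psum2 (csub h (trunc N h)) M <= sqnorm h - psum2 h N.
Proof. intros Hh. pose proof (psum2_le_sqnorm h N Hh). destruct (Nat.le_gt_cases N M).
  - assert (E : psum2 (csub h (trunc N h)) M + psum2 (trunc N h) M = psum2 h M).
    { rewrite !psum2_rsum2, <- rsum2_plus. apply rsum2_ext; intros. unfold csub, trunc.
      destruct (Nat.ltb i N && Nat.ltb j N)%bool; rewrite !Cmod2_alt; destruct (h i j); simpl; ring. }
    assert (E2 : psum2 (trunc N h) M = psum2 h N).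
    { unfold psum2. rewrite (rsum_extend _ N M); auto.
      - apply rsum_ext; intros i Hi. rewrite (rsum_extend _ N M); auto.
        + apply rsum_ext; intros k Hk. unfold trunc.
          destruct (Nat.ltb_spec i N), (Nat.ltb_spec k N); simpl; auto; lia.
        + intros k Hk. unfold trunc.
          destruct (Nat.ltb_spec i N), (Nat.ltb_spec k N); simpl; try lia. apply Cmod2_0.
      - intros k Hk. apply rsum_eq0; intros l Hl. unfold trunc.
        destruct (Nat.ltb_spec k N); simpl; try lia. apply Cmod2_0. }
    pose proof (psum2_le_sqnorm h M Hh). lra.
  - assert (psum2 (csub h (trunc N h)) M = 0); [|lra].
    apply rsum_eq0; intros. apply rsum_eq0; intros. unfold csub, trunc.
    destruct (Nat.ltb_spec k N), (Nat.ltb_spec k0 N); simpl; try lia.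
    replace (Cminus (h k k0) (h k k0)) with (RtoC 0) by cring. apply Cmod2_0. Qed.

Lemma trunc_approx h : in_H2 h -> forall eps, 0 < eps -> exists N, sqnorm (csub h (trunc N h)) <= eps.
Proof. intros Hh eps He. pose proof (is_lim_seq_sqnorm h Hh) as L. apply is_lim_seq_spec in L.
  destruct (L (mkposreal eps He)) as [N HN]. exists N. apply sqnorm_le. intros M.
  eapply Rle_trans; [apply psum2_trunc_err; auto|]. pose proof (HN N (le_n N)) as H. simpl in H.
  apply Rabs_lt_between in H. lra. Qed.

Lemma ip_fsum K F x : (forall k, (k < K)%nat -> in_H2 (F k)) -> in_H2 x ->
  ip (fsum K F) x = csum (fun k => ip (F k) x) K.
Proof. intros HF Hx. induction K.
  - apply ip_zero_l; auto.
  - assert (HK : in_H2 (fsum K F)) by (apply in_H2_fsum; intros; apply HF; lia).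
    change (fsum (S K) F) with (cadd (fsum K F) (F K)).
    rewrite ip_add_l, IHK by (auto; intros; apply HF; lia). reflexivity. Qed.

Lemma ip_mulp q g x : in_H2 g -> in_H2 x -> ip (mulp q g) x =
  csum (fun a => csum (fun b => Cmult (pcoef q a b) (ip (sh a b g) x)) (S (pdeg q))) (S (pdeg q)).
Proof. intros Hg Hx. assert (Hsh : forall a b, in_H2 (sh a b g)) by (intros; apply in_H2_sh; auto).
  rewrite mulp_expand, ip_fsum; auto.
  - apply csum_ext; intros a _. rewrite ip_fsum; auto.
    + apply csum_ext; intros b _. apply ip_scal_l; auto.
    + intros; apply in_H2_scal; auto.
  - intros; apply in_H2_fsum; intros; apply in_H2_scal; auto. Qed.

(** * Generated submodules *)

Section Generated.
Variables (m : nat) (gs : nat -> coefs).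
Hypothesis gs_H2 : forall k, (k < m)%nat -> in_H2 (gs k).

Lemma in_H2_pcombo qs : in_H2 (pcombo m qs gs).
Proof. apply in_H2_fsum; intros. apply in_H2_mulp; auto. Qed.

Lemma in_gen_H2 f : in_gen m gs f -> in_H2 f.
Proof. intros [H _]; exact H. Qed.

Lemma in_gen_pcombo qs : in_gen m gs (pcombo m qs gs).
Proof. split; [apply in_H2_pcombo|]. intros eps He. exists qs. intros N.
  rewrite (psum2_ext _ czero), psum2_zero by (intros; unfold csub, czero; cring). lra. Qed.

Lemma in_gen_mulp q k0 : (k0 < m)%nat -> in_gen m gs (mulp q (gs k0)).
Proof. intros Hk. replace (mulp q (gs k0)) with (pcombo m (fun k => if Nat.eqb k k0 then q else pzero) gs).
  - apply in_gen_pcombo.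
  - apply coefs_ext; intros i j. unfold pcombo. rewrite (csum_single _ _ k0); auto.
    + rewrite Nat.eqb_refl. auto.
    + intros k Hk1 Hk2. destruct (Nat.eqb_spec k k0); [lia|]. rewrite mulp_pzero. reflexivity. Qed.

Lemma in_gen_sh a b k0 : (k0 < m)%nat -> in_gen m gs (sh a b (gs k0)).
Proof. rewrite <- mulp_pmono. apply in_gen_mulp. Qed.

Lemma in_gen_zero : in_gen m gs czero.
Proof. replace czero with (pcombo m (fun _ => pzero) gs); [apply in_gen_pcombo|].
  apply coefs_ext; intros. apply csum_eq0; intros. rewrite mulp_pzero. reflexivity. Qed.

Lemma pcombo_lin qs1 qs2 c : pcombo m (fun k => padd (qs1 k) (pscal c (qs2 k))) gs =
  cadd (pcombo m qs1 gs) (cscal c (pcombo m qs2 gs)).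
Proof. apply coefs_ext; intros i j. unfold pcombo, cadd, cscal. rewrite <- csum_scal, <- csum_plus.
  apply csum_ext; intros. rewrite mulp_padd, mulp_pscal. reflexivity. Qed.

Lemma in_gen_lin f g c : in_gen m gs f -> in_gen m gs g -> in_gen m gs (cadd f (cscal c g)).
Proof. intros [Hf Af] [Hg Ag]. split; [apply in_H2_add; auto; apply in_H2_scal; auto|].
  intros eps He. pose proof (Cmod2_nonneg c).
  destruct (Af (eps / 4)) as [qs1 H1]; [lra|].
  destruct (Ag (eps / (4 * (Cmod c ^ 2 + 1)))) as [qs2 H2]; [apply Rdiv_lt_0_compat; lra|].
  exists (fun k => padd (qs1 k) (pscal c (qs2 k))). intros N. rewrite pcombo_lin.
  rewrite (psum2_ext _ (cadd (csub f (pcombo m qs1 gs)) (cscal c (csub g (pcombo m qs2 gs)))))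
    by (intros; unfold cadd, csub, cscal; cring).
  eapply Rle_trans; [apply psum2_add_le|]. rewrite psum2_scal.
  pose proof (H1 N). pose proof (H2 N).
  assert (Cmod c ^ 2 * psum2 (csub g (pcombo m qs2 gs)) N <= eps / 4).
  { apply Rle_trans with (Cmod c ^ 2 * (eps / (4 * (Cmod c ^ 2 + 1)))).
    - apply Rmult_le_compat_l; auto.
    - apply Rmult_le_reg_r with (4 * (Cmod c ^ 2 + 1)); [lra|]. field_simplify; nra. }
  lra. Qed.

Lemma in_gen_sub f g : in_gen m gs f -> in_gen m gs g -> in_gen m gs (csub f g).
Proof. intros Hf Hg. replace (csub f g) with (cadd f (cscal (RtoC (-1)) g)).
  - apply in_gen_lin; auto.
  - apply coefs_ext; intros; unfold cadd, csub, cscal; cring. Qed.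

Lemma in_gen_closed f : in_H2 f ->
  (forall eps, 0 < eps -> exists v, in_gen m gs v /\ sqnorm (csub f v) <= eps) -> in_gen m gs f.
Proof. intros Hf H. split; auto. intros eps He. destruct (H (eps / 4)) as [v [[Hv Av] Hn]]; [lra|].
  destruct (Av (eps / 4)) as [qs Hq]; [lra|]. exists qs. intros N.
  rewrite (psum2_ext _ (cadd (csub f v) (csub v (pcombo m qs gs)))) by (intros; unfold cadd, csub; cring).
  eapply Rle_trans; [apply psum2_add_le|].
  pose proof (psum2_le_sqnorm (csub f v) N (in_H2_sub _ _ Hf Hv)). pose proof (Hq N). lra. Qed.

Lemma mulz_pcombo qs : mulz (pcombo m qs gs) = pcombo m (fun k => pmulz (qs k)) gs.
Proof. apply coefs_ext; intros i j. unfold pcombo. rewrite (csum_ext _ (fun k => mulz (mulp (qs k) (gs k)) i j))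
    by (intros; rewrite mulz_mulp; reflexivity).
  unfold mulz. destruct i; [|reflexivity]. symmetry. apply csum_eq0; auto. Qed.

Lemma in_gen_mulz u : in_gen m gs u -> in_gen m gs (mulz u).
Proof. intros [Hu Au]. apply in_gen_closed; [apply in_H2_mulz; auto|]. intros eps He.
  destruct (Au eps He) as [qs Hq]. exists (mulz (pcombo m qs gs)). split.
  - rewrite mulz_pcombo. apply in_gen_pcombo.
  - apply sqnorm_le. intros N. replace (csub (mulz u) (mulz (pcombo m qs gs)))
      with (mulz (csub u (pcombo m qs gs))) by (apply coefs_ext; intros [|i] j; unfold mulz, csub; cring).
    eapply Rle_trans; [apply psum2_mulz_le|]. auto. Qed.

Lemma in_gen_mulp_H2 r k0 h : (k0 < m)%nat -> gs k0 = pcoef r -> in_H2 h -> in_gen m gs (mulp r h).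
Proof. intros Hk Hr Hh. apply in_gen_closed; [apply in_H2_mulp; auto|]. intros eps He.
  destruct (psum2_mulp_le r) as [Cr [HC HCr]].
  destruct (trunc_approx h Hh (eps / (Cr + 1))) as [N HN]; [apply Rdiv_lt_0_compat; lra|].
  exists (mulp r (trunc N h)). split.
  - change (trunc N h) with (pcoef (ptrunc N h)). rewrite mulp_comm, <- Hr. apply in_gen_mulp; auto.
  - rewrite <- mulp_csub. apply sqnorm_le. intros M. eapply Rle_trans; [apply HCr|].
    assert (Htr : in_H2 (csub h (trunc N h))).
    { apply in_H2_sub; auto. apply (in_H2_finite_support _ N). intros i j Hij. unfold trunc.
      destruct (Nat.ltb_spec i N), (Nat.ltb_spec j N); simpl; auto; lia. }
    pose proof (psum2_le_sqnorm _ M Htr).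
    apply Rle_trans with (Cr * (eps / (Cr + 1))); [apply Rmult_le_compat_l; lra|].
    apply Rmult_le_reg_r with (Cr + 1); [lra|]. field_simplify; nra. Qed.

Lemma in_gen_orth_projection h : in_H2 h ->
  exists u, in_gen m gs u /\ forall v, in_gen m gs v -> ip (csub h u) v = RtoC 0.
Proof. apply orth_projection.
  - apply in_gen_H2. - apply in_gen_zero. - intros; apply in_gen_lin; auto.
  - intros; apply in_gen_closed; auto. Qed.

End Generated.

Lemma in_gen_head m g0 (gs : nat -> coefs) y : gs 0%nat = g0 ->
  in_gen 1 (fun _ => g0) y -> in_gen (S m) gs y.
Proof. intros Hg [Hy Ay]. split; auto. intros eps He. destruct (Ay eps He) as [qs Hq].
  exists (fun k => match k with O => qs 0%nat | _ => pzero end). intros N.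
  rewrite (psum2_ext _ (csub y (pcombo 1 qs (fun _ => g0)))); auto. intros i j. unfold csub. f_equal.
  unfold pcombo. rewrite (csum_extend _ 1 (S m)); try lia.
  - simpl. rewrite Hg. reflexivity.
  - intros k Hk. destruct k; [lia|]. rewrite mulp_pzero. reflexivity. Qed.

(** * Finite dimensionality *)

Lemma finite_span_of_separating (L : nat) : forall (Sp : coefs -> Prop) (phi : nat -> coefs -> C),
  (forall x y c, Sp x -> Sp y -> Sp (cadd x (cscal c y))) ->
  (forall l x y c, (l < L)%nat -> Sp x -> Sp y ->
     phi l (cadd x (cscal c y)) = Cplus (phi l x) (Cmult c (phi l y))) ->
  (forall x, Sp x -> (forall l, (l < L)%nat -> phi l x = RtoC 0) -> x = czero) ->
  exists d vs, (forall k, (k < d)%nat -> Sp (vs k)) /\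
    forall x, Sp x -> exists cs, x = lincomb d cs vs.
Proof. induction L; intros Sp phi HS Hphi Hker.
  - exists 0%nat, (fun _ => czero). split; [intros; lia|]. intros x Hx. exists (fun _ => RtoC 0).
    rewrite (Hker x Hx) by (intros; lia). reflexivity.
  - destruct (classic (exists s0, Sp s0 /\ phi L s0 <> RtoC 0)) as [[s0 [Hs0 Hp0]]|Hno].
    + (* the kernel of [phi L] inside [Sp] is spanned by induction; add [s0] *)
      destruct (IHL (fun x => Sp x /\ phi L x = RtoC 0) phi) as [d [vs [Hvs Hspan]]].
      * intros x y c [Hx1 Hx2] [Hy1 Hy2]. split; auto. rewrite Hphi, Hx2, Hy2 by auto. cring.
      * intros l x y c Hl [Hx _] [Hy _]. apply Hphi; auto; lia.
      * intros x [Hx1 Hx2] Hl. apply Hker; auto. intros l Hl'.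
        destruct (Nat.eq_dec l L); [subst; auto|]. apply Hl; lia.
      * exists (S d), (fun k => if Nat.ltb k d then vs k else s0). split.
        { intros k Hk. destruct (Nat.ltb_spec k d); [apply Hvs; auto|auto]. }
        intros x Hx. set (a := Cdiv (phi L x) (phi L s0)).
        destruct (Hspan (cadd x (cscal (Copp a) s0))) as [cs Hcs].
        { split; [apply HS; auto|]. rewrite Hphi by auto. unfold a. field. auto. }
        exists (fun k => if Nat.ltb k d then cs k else a).
        apply coefs_ext; intros i j. unfold lincomb. simpl csum. rewrite Nat.ltb_irrefl.
        rewrite (csum_ext _ (fun k => Cmult (cs k) (vs k i j))).
        2:{ intros k Hk. destruct (Nat.ltb_spec k d); [auto|lia]. }
        assert (E : cadd x (cscal (Copp a) s0) i j = lincomb d cs vs i j) by (rewrite Hcs; auto).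
        unfold lincomb, cadd, cscal in E. rewrite <- E. cring.
    + apply (IHL Sp phi); auto. intros x Hx Hl. apply Hker; auto. intros l Hl'.
      destruct (Nat.eq_dec l L).
      * subst. apply NNPP. intros C. apply Hno. exists x; auto.
      * apply Hl; lia. Qed.

Lemma last_nonzero (c : nat -> C) P : (exists b, (b <= P)%nat /\ c b <> RtoC 0) ->
  exists D, (D <= P)%nat /\ c D <> RtoC 0 /\ forall b, (D < b <= P)%nat -> c b = RtoC 0.
Proof. induction P; intros [b [Hb Hcb]].
  - exists 0%nat. replace b with 0%nat in Hcb by lia. repeat split; auto. intros; lia.
  - destruct (classic (c (S P) = RtoC 0)) as [E|E].
    + destruct IHP as [D [HD1 [HD2 HD3]]].
      { exists b. split; auto. destruct (Nat.eq_dec b (S P)); [subst; contradiction|lia]. }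
      exists D. repeat split; auto. intros b' Hb'.
      destruct (Nat.eq_dec b' (S P)); [subst; auto|]. apply HD3; lia.
    + exists (S P). repeat split; auto. intros; lia. Qed.

Lemma linear_recurrence_eq0 (c al : nat -> C) K :
  (exists b, (b < K)%nat /\ c b <> RtoC 0) ->
  (forall m, csum (fun b => Cmult (c b) (al (b + m)%nat)) K = RtoC 0) ->
  (forall j, (j < K)%nat -> al j = RtoC 0) -> forall j, al j = RtoC 0.
Proof. intros [b0 [Hb0 Hc0]] Hrec Hinit.
  destruct (last_nonzero c (K - 1) ltac:(exists b0; split; [lia|auto])) as [D [HD1 [HD2 HD3]]].
  (* the relation at shift [N - D] expresses [al N] through earlier terms *)
  assert (Hall : forall N j, (j < N)%nat -> al j = RtoC 0).
  { induction N; intros j Hj; [lia|]. destruct (Nat.eq_dec j N); [|apply IHN; lia]. subst j.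
    destruct (Nat.lt_ge_cases N K); [auto|].
    pose proof (Hrec (N - D)%nat) as R. rewrite (csum_single _ _ D) in R; [|lia|].
    2:{ intros b Hb HbD. destruct (Nat.lt_ge_cases b D);
        [rewrite IHN by lia|rewrite HD3 by lia]; cring. }
    replace (D + (N - D))%nat with N in R by lia. exact (Cmult_eq0_l _ _ HD2 R). }
  intros j. apply (Hall (S j)). lia. Qed.

(** * The kernel of the adjoint of the compressed shift *)

Section CompressedShift.
Variables (p : poly2) (n : nat) (fs : nat -> coefs).
Hypothesis fs_H2 : forall k, (k < n)%nat -> in_H2 (fs k).

Definition gensM (k : nat) : coefs := match k with O => pcoef p | S k' => fs k' end.
Definition in_M : coefs -> Prop := in_gen (S n) gensM.
Definition in_P : coefs -> Prop := in_gen 1 (fun _ => pcoef p).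
Definition in_Q (x : coefs) : Prop := in_M x /\ forall y, in_P y -> orth x y.
Definition in_ker (x : coefs) : Prop := in_Q x /\ forall y, in_Q y -> orth (mulz y) x.

Lemma gensM_H2 k : (k < S n)%nat -> in_H2 (gensM k).
Proof. destruct k as [|k]; intros Hk; [apply in_H2_pcoef|apply fs_H2; lia]. Qed.

Lemma in_ker_H2 x : in_ker x -> in_H2 x.
Proof. intros [[HM _] _]. exact (in_gen_H2 _ _ _ HM). Qed.

Lemma in_ker_lin x y c : in_ker x -> in_ker y -> in_ker (cadd x (cscal c y)).
Proof. intros [[HxM HxP] HxQ] [[HyM HyP] HyQ]. split; [split|].
  - apply in_gen_lin; auto.
  - intros v Hv. apply orth_lin_l; auto.
  - intros v Hv. apply orth_lin_r; auto. Qed.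

Lemma in_ker_orth_P x y : in_ker x -> in_P y -> ip y x = RtoC 0.
Proof. intros Hx Hy. pose proof (in_ker_H2 x Hx) as HxH. pose proof (in_gen_H2 _ _ _ Hy) as HyH.
  destruct Hx as [[_ HxP] _].
  rewrite ip_conj, (proj1 (orth_ip x y HxH HyH) (HxP y Hy)) by auto. cring. Qed.

(* Split [y = (y - u) + u] with [u] the projection of [y] on [[p]]: then [y - u] lies in [Q]
   and [z u] in [[p]]. *)
Lemma in_ker_orth_mulz x y : in_ker x -> in_M y -> ip (mulz y) x = RtoC 0.
Proof. intros Hx Hy. pose proof (in_ker_H2 x Hx) as HxH. pose proof (in_gen_H2 _ _ _ Hy) as HyH.
  destruct (in_gen_orth_projection 1 (fun _ => pcoef p) (fun _ _ => in_H2_pcoef p) y HyH)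
    as [u [Hu Hperp]].
  pose proof (in_gen_H2 _ _ _ Hu) as HuH.
  assert (HyuQ : in_Q (csub y u)).
  { split.
    - apply in_gen_sub; auto. apply (in_gen_head n (pcoef p)); auto.
    - intros v Hv. apply orth_ip; [apply in_H2_sub; auto|apply (in_gen_H2 _ _ _ Hv)|auto]. }
  pose proof (proj2 Hx _ HyuQ) as H1. apply orth_ip in H1; auto using in_H2_mulz, in_H2_sub.
  pose proof (in_ker_orth_P x _ Hx (in_gen_mulz 1 _ (fun _ _ => in_H2_pcoef p) u Hu)) as H2.
  rewrite (coefs_ext (mulz y) (cadd (mulz (csub y u)) (mulz u)))
    by (intros [|i] j; unfold mulz, cadd, csub; cring).
  rewrite ip_add_l, H1, H2 by auto using in_H2_mulz, in_H2_sub. cring. Qed.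

Lemma in_ker_orth_sh x k a b : in_ker x -> (k < S n)%nat -> (0 < a)%nat ->
  ip (sh a b (gensM k)) x = RtoC 0.
Proof. intros Hx Hk Ha. replace (sh a b (gensM k)) with (mulz (sh (a - 1) b (gensM k))).
  - apply in_ker_orth_mulz; auto. apply in_gen_sh; auto using gensM_H2.
  - rewrite mulz_sh, sh_sh. f_equal; lia. Qed.

(* Expanding [<p w^m f_k, x> = 0] in monomials, only the terms of [p(0, w)] survive. *)
Lemma in_ker_recurrence x k m : in_ker x -> (k < n)%nat ->
  csum (fun b => Cmult (pcoef p 0 b) (ip (sh 0 (b + m) (fs k)) x)) (S (pdeg p)) = RtoC 0.
Proof. intros Hx Hk. pose proof (in_ker_H2 x Hx) as HxH.
  assert (Hf : in_H2 (sh 0 m (fs k))) by (apply in_H2_sh; auto).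
  assert (HP : in_P (mulp p (sh 0 m (fs k))))
    by (apply (in_gen_mulp_H2 1 _ (fun _ _ => in_H2_pcoef p) p 0); auto).
  symmetry. transitivity (ip (mulp p (sh 0 m (fs k))) x); [symmetry; apply in_ker_orth_P; auto|].
  rewrite ip_mulp, csum_first by auto.
  match goal with |- Cplus _ ?B = _ => replace B with (RtoC 0) end.
  - rewrite Cplus_0_r. apply csum_ext; intros b _. rewrite sh_sh. reflexivity.
  - symmetry. apply csum_eq0; intros a _. apply csum_eq0; intros b _. rewrite sh_sh.
    change (fs k) with (gensM (S k)). rewrite in_ker_orth_sh by (auto; lia). cring. Qed.

Lemma in_ker_eq0 x : (exists b, (b <= pdeg p)%nat /\ pcoef p 0 b <> RtoC 0) -> in_ker x ->
  (forall k j, (k < n)%nat -> (j < S (pdeg p))%nat -> ip x (sh 0 j (fs k)) = RtoC 0) ->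
  x = czero.
Proof. intros [b0 Hb0] Hx Hinit. pose proof (in_ker_H2 x Hx) as HxH.
  assert (Hw : forall k j, (k < n)%nat -> ip (sh 0 j (fs k)) x = RtoC 0).
  { intros k j Hk. apply (linear_recurrence_eq0 (pcoef p 0) (fun j => ip (sh 0 j (fs k)) x) (S (pdeg p))).
    - exists b0. split; [lia|apply Hb0].
    - intros m. apply in_ker_recurrence; auto.
    - intros i Hi. rewrite ip_conj, Hinit by (auto; apply in_H2_sh; auto). cring. }
  assert (Hgens : forall k a b, (k < S n)%nat -> ip (sh a b (gensM k)) x = RtoC 0).
  { intros [|k] a b Hk.
    - apply in_ker_orth_P; auto. apply (in_gen_sh 1 _ (fun _ _ => in_H2_pcoef p) a b 0); lia.
    - destruct a; [apply Hw; lia|apply in_ker_orth_sh; auto; lia]. }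
  apply eq0_of_orth_dense; auto. intros eps He. destruct Hx as [[[_ HM] _] _].
  destruct (HM eps He) as [qs Hq]. exists (pcombo (S n) qs gensM). repeat split.
  - apply in_H2_pcombo, gensM_H2.
  - change (pcombo (S n) qs gensM) with (fsum (S n) (fun k => mulp (qs k) (gensM k))).
    rewrite ip_fsum by (auto; intros; apply in_H2_mulp, gensM_H2; auto).
    apply csum_eq0; intros k Hk. rewrite ip_mulp by (auto; apply gensM_H2; auto).
    apply csum_eq0; intros a _. apply csum_eq0; intros b _. rewrite Hgens by auto. cring.
  - apply sqnorm_le. auto. Qed.

End CompressedShift.

Lemma pcoef_z0_nonzero p : peval p (RtoC 0) (RtoC 1) <> RtoC 0 ->
  exists b, (b <= pdeg p)%nat /\ pcoef p 0 b <> RtoC 0.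
Proof. intros H. apply NNPP. intros Hall. apply H. apply csum_eq0; intros [|i] _;
  apply csum_eq0; intros j Hj; simpl cpow; [|cring].
  replace (pcoef p 0 j) with (RtoC 0); [cring|].
  apply NNPP. intros Hj0. apply Hall. exists j. split; [lia|auto]. Qed.

Theorem lemma4p1 (p : poly2) (n : nat) (fs : nat -> coefs)
  (hfs : forall k, (k < n)%nat -> in_H2 (fs k))
  (hp : forall a b : C, peval p a b = RtoC 0 -> a = RtoC 0 -> in_bdry_bidisc a b -> False) :
  let gens : nat -> coefs := fun k => match k with O => pcoef p | S k' => fs k' end in
  let inM : coefs -> Prop := in_gen (S n) gens in
  let inP : coefs -> Prop := in_gen 1 (fun _ => pcoef p) in
  let inQ : coefs -> Prop := fun x => inM x /\ (forall y, inP y -> orth x y) in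
  (* ker T_{z,Q}^* = { x in Q | <P_Q M_z y, x> = <M_z y, x> = 0 for all y in Q } *)
  let inKer : coefs -> Prop := fun x => inQ x /\ (forall y, inQ y -> orth (mulz y) x) in
  exists (d : nat) (vs : nat -> coefs),
    (forall k, (k < d)%nat -> inKer (vs k)) /\
    (forall x, inKer x -> exists cs : nat -> C, x = lincomb d cs vs).
Proof.
  intros gens inM inP inQ inKer.
  assert (Hp0 : exists b, (b <= pdeg p)%nat /\ pcoef p 0 b <> RtoC 0).
  { apply pcoef_z0_nonzero. intros H. apply (hp (RtoC 0) (RtoC 1)); auto.
    unfold in_bdry_bidisc. rewrite Cmod_0, Cmod_1. lra. }
  set (SD := S (pdeg p)).
  (* the functionals [x |-> <x, w^j f_k>], [j <= deg p], [k < n], indexed by [l = k * SD + j] *)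
  set (w := fun l => sh 0 (l mod SD) (fs (l / SD))%nat).
  assert (Hw : forall l, (l < n * SD)%nat -> in_H2 (w l)).
  { intros l Hl. apply in_H2_sh, hfs. apply Nat.Div0.div_lt_upper_bound. lia. }
  apply (finite_span_of_separating (n * SD) (in_ker p n fs) (fun l x => ip x (w l))).
  - intros; apply in_ker_lin; auto.
  - intros l x y c Hl Hx Hy. apply in_ker_H2 in Hx, Hy.
    rewrite ip_add_l, ip_scal_l; auto using in_H2_scal.
  - intros x Hx Hl. apply (in_ker_eq0 p n fs); auto. intros k j Hk Hj.
    specialize (Hl (k * SD + j)%nat ltac:(unfold SD in *; nia)). unfold w in Hl.
    assert (Hq : ((k * SD + j) / SD)%nat = k)
      by (symmetry; apply (Nat.div_unique _ _ _ j); unfold SD in *; lia).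
    assert (Hr : ((k * SD + j) mod SD)%nat = j)
      by (symmetry; apply (Nat.mod_unique _ _ k); unfold SD in *; lia).
    rewrite Hq, Hr in Hl. exact Hl.
Qed.
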